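(* Let $\lambda_1,\lambda_2$ be as in the context. For $K\in(-1,1)\setminus\{0\}$ let $b_K$ solve $b_K'(v)=\sqrt{\lambda_1^2-K(\lambda_1^2\cos^2 b_K(v)+\lambda_2^2\sin^2 b_K(v))}$, $b_K(0)=0$, let $W_K>0$ be the unique number with $b_K(W_K)=\pi$, let $x_{3,K}$ solve $x_{3,K}'(v)=\frac{\lambda_1\lambda_2K}{\lambda_1+b_K'(v)}$, $x_{3,K}(0)=0$, and let $\mathfrak{H}_K=X_K(\mathbb{C})\subset\widetilde{E(2)}$ be the helicoid given by $$X_K(u+iv)=\Big(\tfrac{1}{\lambda_1^2\lambda_2}\big(\tfrac{1}{\lambda_1}\cos x_{3,K}(v)\sin b_K(v)+\tfrac{1}{\lambda_2}\sin x_{3,K}(v)\cos b_K(v)\big)x_{3,K}'(v)\sinh(-\lambda_1u),\ \tfrac{1}{\lambda_1^2\lambda_2}\big(\tfrac{1}{\lambda_1}\sin x_{3,K}(v)\sin b_K(v)-\tfrac{1}{\lambda_2}\cos x_{3,K}(v)\cos b_K(v)\big)x_{3,K}'(v)\sinh(-\lambda_1u),\ x_{3,K}(v)\Big).$$ Then for every real number $T\neq0$ there exists $K\in(-1,1)\setminus\{0\}$ such that $\mathfrak{H}_K$ has period $T$, i.e. $2|x_{3,K}(W_K)|=|T|$, so that $\mathfrak{H}_K$ is invariant under left multiplication by $(0,0,T)$.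
   Context: $\widetilde{E(2)}$ is $\mathbb{R}^3$ with coordinates $(x_1,x_2,x_3)$ and group law $(a_1,b_1,c_1)*(a_2,b_2,c_2)=(a_1+a_2\cos c_1-b_2\sin c_1,\ b_1+a_2\sin c_1+b_2\cos c_1,\ c_1+c_2)$, with the left-invariant metric $\lambda_1^2(\cos x_3\,dx_1+\sin x_3\,dx_2)^2+\lambda_2^2(-\sin x_3\,dx_1+\cos x_3\,dx_2)^2+\frac{1}{\lambda_1^2\lambda_2^2}dx_3^2$, where either $\lambda_1>\lambda_2>0$ or $\lambda_1=\lambda_2=1$. The helicoid $\mathfrak{H}_K$ satisfies $(0,0,2x_{3,K}(W_K))*X_K(u+iv)=X_K(u+i(v+2W_K))$; its period is the translation length $2x_{3,K}(W_K)$, and since $(0,0,-t)$ is the inverse of $(0,0,t)$, invariance under $(0,0,t)$ is equivalent to invariance under $(0,0,-t)$. *)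

From Stdlib Require Import Reals.
Open Scope R_scope.

Definition admissible_lambdas (l1 l2 : R) : Prop :=
  (l1 > l2 /\ l2 > 0) \/ (l1 = 1 /\ l2 = 1).

Definition bK_rhs (l1 l2 K y : R) : R :=
  sqrt (l1 ^ 2 - K * (l1 ^ 2 * (cos y) ^ 2 + l2 ^ 2 * (sin y) ^ 2)).

Definition is_bK (l1 l2 K : R) (b : R -> R) : Prop :=
  b 0 = 0 /\ forall v, derivable_pt_lim b v (bK_rhs l1 l2 K (b v)).

Definition is_x3K (l1 l2 K : R) (b x3 : R -> R) : Prop :=
  x3 0 = 0 /\
  forall v, derivable_pt_lim x3 v (l1 * l2 * K / (l1 + bK_rhs l1 l2 K (b v))).

(* W > 0 with b(W) = pi (unique, since b is strictly increasing). *)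
Definition is_WK (b : R -> R) (W : R) : Prop := W > 0 /\ b W = PI.

Definition helicoid_data (l1 l2 K : R) (b x3 : R -> R) (W : R) : Prop :=
  is_bK l1 l2 K b /\ is_x3K l1 l2 K b x3 /\ is_WK b W.

From Stdlib Require Import Reals Lra Ranalysis5.
From Coquelicot Require Import Coquelicot.
Open Scope R_scope.

(* Substituting y = b_K(v) turns x_{3,K}(W_K) into the integral of x3_density over [0, PI].  This half period vanishes at K = 0, is locally Lipschitz in K < 1, and diverges
   like -ln (1 - K) as K -> 1, since the integrand is at least
   l2 K / (2 (l1 y + l1 sqrt (1 - K))); the intermediate value theorem then gives K.  b_K
   itself is the inverse of the travel time y |-> int_0^y ds / bK_rhs(s). *)

Lemma continuity_pt_lipschitz_near (f : R -> R) x0 d L : 0 < d ->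
  (forall x, Rabs (x - x0) < d -> Rabs (f x - f x0) <= L * Rabs (x - x0)) ->
  continuity_pt f x0.
Proof.
  intros Hd Hf eps Heps.
  set (L' := Rabs L + 1). assert (HL' : 0 < L') by (unfold L'; pose proof (Rabs_pos L); lra).
  exists (Rmin d (eps / L')). split.
  - apply Rmin_pos; [lra | apply Rdiv_lt_0_compat; lra].
  - intros x [_ Hx]. simpl in *. unfold R_dist in *.
    pose proof (Rmin_l d (eps / L')). pose proof (Rmin_r d (eps / L')).
    apply Rle_lt_trans with (L' * Rabs (x - x0)).
    + eapply Rle_trans; [apply Hf; lra|]. pose proof (Rle_abs L). pose proof (Rabs_pos (x - x0)).
      unfold L'. nra.
    + replace eps with (L' * (eps / L')) by (field; lra). apply Rmult_lt_compat_l; lra.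
Qed.

Section ExpandingInverse.

Variables (V dV : R -> R) (c : R).
Hypothesis c_pos : 0 < c.
Hypothesis V_derive : forall y, is_derive V y (dV y).
Hypothesis dV_ge : forall y, c <= dV y.

Lemma expanding_continuity_pt y : continuity_pt V y.
Proof.
  apply continuity_pt_filterlim, (ex_derive_continuous (V := R_NormedModule)).
  eexists; apply V_derive.
Qed.

Lemma expanding_increment y1 y2 : y1 <= y2 -> c * (y2 - y1) <= V y2 - V y1.
Proof.
  intros Hy. destruct (MVT_gen V y1 y2 dV) as [x [_ ->]].
  - intros x _. apply V_derive.
  - intros x _. apply expanding_continuity_pt.
  - pose proof (dV_ge x). nra.
Qed.

Lemma expanding_surjective v : {y | V y = v}.
Proof.
  set (r := Rabs (v - V 0) / c).
  assert (Hr : 0 <= r)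
    by (apply Rmult_le_pos; [apply Rabs_pos | apply Rlt_le, Rinv_0_lt_compat; lra]).
  assert (Hcr : c * r = Rabs (v - V 0)) by (unfold r; field; lra).
  pose proof (expanding_increment (- r) 0 ltac:(lra)).
  pose proof (expanding_increment 0 r Hr).
  pose proof (Rle_abs (v - V 0)). pose proof (Rabs_maj2 (v - V 0)).
  destruct (IVT_gen V (- r) r v) as [y [_ Hy]].
  - intros y. apply expanding_continuity_pt.
  - split; [apply Rle_trans with (V (- r)); [apply Rmin_l | nra]
          | apply Rle_trans with (V r); [nra | apply Rmax_r]].
  - exists y. exact Hy.
Qed.

Definition expanding_inv (v : R) : R := proj1_sig (expanding_surjective v).

Lemma V_expanding_inv v : V (expanding_inv v) = v.
Proof. exact (proj2_sig (expanding_surjective v)). Qed.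

Lemma expanding_inv_increment v1 v2 :
  expanding_inv v1 <= expanding_inv v2 -> c * (expanding_inv v2 - expanding_inv v1) <= v2 - v1.
Proof.
  intros Hle. rewrite <- (V_expanding_inv v1), <- (V_expanding_inv v2) at 2.
  now apply expanding_increment.
Qed.

Lemma expanding_inv_mono v1 v2 : v1 <= v2 -> expanding_inv v1 <= expanding_inv v2.
Proof.
  intros Hv. destruct (Rle_lt_dec (expanding_inv v1) (expanding_inv v2)) as [|Hlt]; [easy|].
  pose proof (expanding_inv_increment v2 v1 ltac:(lra)). nra.
Qed.

Lemma expanding_inv_V y : expanding_inv (V y) = y.
Proof.
  destruct (Rtotal_order (expanding_inv (V y)) y) as [Hlt|[Heq|Hlt]]; [|easy|];
    pose proof (expanding_increment _ _ (Rlt_le _ _ Hlt)); rewrite V_expanding_inv in *; nra.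
Qed.

Lemma expanding_inv_lipschitz v1 v2 :
  Rabs (expanding_inv v1 - expanding_inv v2) <= / c * Rabs (v1 - v2).
Proof.
  assert (Hc : 0 < / c) by (apply Rinv_0_lt_compat; lra).
  destruct (Rle_dec v1 v2) as [Hv|Hv].
  - pose proof (expanding_inv_mono v1 v2 Hv) as Hb.
    pose proof (expanding_inv_increment v1 v2 Hb).
    rewrite Rabs_minus_sym, (Rabs_minus_sym v1), !Rabs_right by lra.
    apply (Rmult_le_reg_l c); [lra|]. rewrite <- Rmult_assoc, Rinv_r, Rmult_1_l; lra.
  - pose proof (expanding_inv_mono v2 v1 ltac:(lra)) as Hb.
    pose proof (expanding_inv_increment v2 v1 Hb).
    rewrite !Rabs_right by lra.
    apply (Rmult_le_reg_l c); [lra|]. rewrite <- Rmult_assoc, Rinv_r, Rmult_1_l; lra.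
Qed.

Lemma derivable_pt_lim_expanding_inv v :
  derivable_pt_lim expanding_inv v (/ dV (expanding_inv v)).
Proof.
  set (b := expanding_inv).
  assert (Hb : b (v - 1) <= b v <= b (v + 1)) by (split; apply expanding_inv_mono; lra).
  pose (PrV := fun y (_ : b (v - 1) <= y <= b (v + 1)) =>
    exist (fun l => derivable_pt_abs V y l) (dV y) (proj1 (is_derive_Reals _ _ _) (V_derive y))).
  assert (Hne : derive_pt V (b v) (PrV (b v) Hb) <> 0) by (simpl; pose proof (dV_ge (b v)); lra).
  pose proof (derivable_pt_lim_recip_interv V b (v - 1) (v + 1) v PrV
    (continuity_pt_lipschitz_near b v 1 (/ c) ltac:(lra) (fun x _ => expanding_inv_lipschitz x v))
    ltac:(lra) ltac:(lra) Hb (fun x _ => V_expanding_inv x) Hne) as D.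
  simpl in D. replace (/ dV (b v)) with (1 / dV (b v)) by (field; pose proof (dV_ge (b v)); lra).
  exact D.
Qed.

End ExpandingInverse.

Lemma autonomous_ode_solution (F : R -> R) (M : R) :
  (forall y, continuous F y) -> (forall y, 0 < F y <= M) ->
  exists b : R -> R, b 0 = 0 /\ (forall v, derivable_pt_lim b v (F (b v))) /\
    forall y, 0 < y -> exists W, 0 < W /\ b W = y.
Proof.
  intros F_cont F_bounds.
  assert (HM : 0 < M) by (destruct (F_bounds 0); lra).
  assert (HinvF : forall y, continuous (fun s => / F s) y).
  { intros y. apply continuous_Rinv_comp; [apply F_cont | destruct (F_bounds y); lra]. }
  set (V y := RInt (fun s => / F s) 0 y).
  assert (V_derive : forall y, is_derive V y (/ F y)).
  { intros y. apply (is_derive_RInt (V := R_CompleteNormedModule) (fun s => / F s) V 0 y).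
    - apply filter_forall. intros x.
      apply RInt_correct, (ex_RInt_continuous (V := R_CompleteNormedModule)).
      intros z _. apply HinvF.
    - apply HinvF. }
  assert (dV_ge : forall y, / M <= / F y)
    by (intros y; destruct (F_bounds y); apply Rinv_le_contravar; lra).
  assert (V0 : V 0 = 0) by exact (RInt_point (V := R_CompleteNormedModule) 0 _).
  set (b := expanding_inv V (fun y => / F y) (/ M) (Rinv_0_lt_compat M HM) V_derive dV_ge).
  exists b. split; [|split].
  - rewrite <- V0 at 1. apply expanding_inv_V.
  - intros v. rewrite <- (Rinv_inv (F (b v))). apply derivable_pt_lim_expanding_inv.
  - intros y Hy. exists (V y). split.
    + pose proof (expanding_increment V _ _ V_derive dV_ge 0 y ltac:(lra)).
      assert (0 < / M * y) by (apply Rmult_lt_0_compat; [apply Rinv_0_lt_compat|]; lra). lra.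
    + apply expanding_inv_V.
Qed.

Section Helicoid.

Variables l1 l2 : R.
Hypothesis l2_pos : 0 < l2.
Hypothesis l2_le_l1 : l2 <= l1.

Definition bK_weight (y : R) : R := l1 ^ 2 * (cos y) ^ 2 + l2 ^ 2 * (sin y) ^ 2.

Lemma bK_rhs_weight K y : bK_rhs l1 l2 K y = sqrt (l1 ^ 2 - K * bK_weight y).
Proof. reflexivity. Qed.

Lemma bK_weight_bounds y : l2 ^ 2 <= bK_weight y <= l1 ^ 2.
Proof.
  unfold bK_weight.
  assert (Hsc : sin y ^ 2 + cos y ^ 2 = 1) by (rewrite <- (sin2_cos2 y); unfold Rsqr; ring).
  assert (l2 ^ 2 <= l1 ^ 2) by nra.
  split; nra.
Qed.

Lemma bK_radicand_ge K a y : 0 <= a -> K <= a -> (1 - a) * l1 ^ 2 <= l1 ^ 2 - K * bK_weight y.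
Proof.
  intros Ha HK. destruct (bK_weight_bounds y). destruct (Rle_lt_dec 0 K); nra.
Qed.

Lemma bK_rhs_ge K a y : 0 <= a < 1 -> K <= a -> (1 - a) * l1 <= bK_rhs l1 l2 K y.
Proof.
  intros Ha HK. rewrite bK_rhs_weight, <- (sqrt_pow2 ((1 - a) * l1)) by nra.
  apply sqrt_le_1_alt. pose proof (bK_radicand_ge K a y ltac:(lra) HK).
  assert (0 <= (1 - a) * l1 ^ 2) by nra. nra.
Qed.

Lemma bK_rhs_pos K y : K < 1 -> 0 < bK_rhs l1 l2 K y.
Proof.
  intros HK. pose proof (bK_rhs_ge K (Rmax 0 K) y).
  pose proof (Rmax_l 0 K). pose proof (Rmax_r 0 K).
  assert (Rmax 0 K < 1) by (apply Rmax_lub_lt; lra).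
  assert (0 < (1 - Rmax 0 K) * l1) by nra. lra.
Qed.

Lemma bK_rhs_le K y : 0 <= K -> bK_rhs l1 l2 K y <= l1.
Proof.
  intros HK. rewrite bK_rhs_weight. apply Rle_trans with (sqrt (l1 ^ 2)).
  - apply sqrt_le_1_alt. destruct (bK_weight_bounds y). nra.
  - rewrite sqrt_pow2; lra.
Qed.

Lemma bK_rhs_sq K y : K < 1 -> bK_rhs l1 l2 K y ^ 2 = l1 ^ 2 - K * bK_weight y.
Proof.
  intros HK. rewrite bK_rhs_weight. apply pow2_sqrt.
  pose proof (bK_radicand_ge K (Rmax 0 K) y (Rmax_l 0 K) (Rmax_r 0 K)).
  assert (Rmax 0 K < 1) by (apply Rmax_lub_lt; lra). nra.
Qed.

Lemma continuous_bK_rhs K y : continuous (bK_rhs l1 l2 K) y.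
Proof.
  apply continuous_sqrt_comp, (ex_derive_continuous (V := R_NormedModule)).
  auto_derive. exact I.
Qed.

(* The derivative of x_{3,K} with respect to b_K, i.e. x_{3,K}' / b_K'. *)
Definition x3_density (K y : R) : R :=
  l1 * l2 * K / ((l1 + bK_rhs l1 l2 K y) * bK_rhs l1 l2 K y).

Lemma continuous_x3_density K y : K < 1 -> continuous (x3_density K) y.
Proof.
  intros HK. pose proof (bK_rhs_pos K y HK).
  apply (continuous_mult (fun _ => l1 * l2 * K)); [apply continuous_const|].
  apply continuous_Rinv_comp; [|nra].
  apply (continuous_mult (fun y => l1 + bK_rhs l1 l2 K y)); [|apply continuous_bK_rhs].
  apply (continuous_plus (fun _ => l1)); [apply continuous_const|apply continuous_bK_rhs].
Qed.

Lemma x3_density_sub K K' y : K < 1 -> K' < 1 ->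
  x3_density K y - x3_density K' y =
  l1 ^ 2 * l2 * (K - K') /
    (bK_rhs l1 l2 K y * bK_rhs l1 l2 K' y * (bK_rhs l1 l2 K y + bK_rhs l1 l2 K' y)).
Proof.
  intros HK HK'.
  pose proof (bK_rhs_pos K y HK). pose proof (bK_rhs_pos K' y HK').
  pose proof (bK_rhs_sq K y HK) as Hsq. pose proof (bK_rhs_sq K' y HK') as Hsq'.
  destruct (bK_weight_bounds y).
  unfold x3_density. set (f := bK_rhs l1 l2 K y) in *. set (f' := bK_rhs l1 l2 K' y) in *.
  set (w := bK_weight y) in *.
  assert (HKf : K = (l1 ^ 2 - f ^ 2) / w) by (rewrite Hsq; field; nra).
  assert (HKf' : K' = (l1 ^ 2 - f' ^ 2) / w) by (rewrite Hsq'; field; nra).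
  rewrite HKf, HKf'. field. nra.
Qed.

Lemma x3_density_lipschitz a K K' y : 0 <= a < 1 -> K <= a -> K' <= a ->
  Rabs (x3_density K y - x3_density K' y) <=
  l1 ^ 2 * l2 / (2 * ((1 - a) * l1) ^ 3) * Rabs (K - K').
Proof.
  intros Ha HK HK'. rewrite x3_density_sub by lra.
  pose proof (bK_rhs_ge K a y Ha HK). pose proof (bK_rhs_ge K' a y Ha HK').
  set (f := bK_rhs l1 l2 K y) in *. set (f' := bK_rhs l1 l2 K' y) in *.
  set (m := (1 - a) * l1) in *. assert (Hm : 0 < m) by (unfold m; nra).
  assert (Hden : 2 * m ^ 3 <= f * f' * (f + f')).
  { assert (m * m <= f * f') by (apply Rmult_le_compat; lra).
    replace (2 * m ^ 3) with (m * m * (2 * m)) by ring. apply Rmult_le_compat; nra. }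
  assert (0 < l1 ^ 2 * l2) by (apply Rmult_lt_0_compat; [apply pow_lt|]; lra).
  assert (0 < f * f' * (f + f')) by (apply Rmult_lt_0_compat; [apply Rmult_lt_0_compat|]; lra).
  rewrite Rabs_div, Rabs_mult, (Rabs_pos_eq (l1 ^ 2 * l2)), (Rabs_pos_eq (f * f' * (f + f')))
    by lra.
  pose proof (Rabs_pos (K - K')).
  assert (0 < 2 * m ^ 3) by (pose proof (pow_lt m 3 Hm); lra).
  replace (l1 ^ 2 * l2 / (2 * m ^ 3) * Rabs (K - K'))
    with (l1 ^ 2 * l2 * Rabs (K - K') / (2 * m ^ 3)) by (field; lra).
  apply Rmult_le_compat_l; [nra|]. apply Rinv_le_contravar; lra.
Qed.

Lemma ex_RInt_x3_density K a b : K < 1 -> ex_RInt (x3_density K) a b.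
Proof.
  intros HK. apply (ex_RInt_continuous (V := R_CompleteNormedModule)).
  intros y _. now apply continuous_x3_density.
Qed.

Definition half_period (K : R) : R := RInt (x3_density K) 0 PI.

Lemma half_period_0 : half_period 0 = 0.
Proof.
  unfold half_period. rewrite (RInt_ext _ (fun _ => 0)).
  - rewrite RInt_const. apply (scal_zero_r (K := R_AbsRing) (V := R_NormedModule)).
  - intros y _. unfold x3_density. rewrite Rmult_0_r. apply Rdiv_0_l.
Qed.

Lemma half_period_lipschitz a K K' : 0 <= a < 1 -> K <= a -> K' <= a ->
  Rabs (half_period K - half_period K') <=
  PI * (l1 ^ 2 * l2 / (2 * ((1 - a) * l1) ^ 3) * Rabs (K - K')).
Proof.
  intros Ha HK HK'. unfold half_period.
  rewrite <- (RInt_minus (V := R_CompleteNormedModule)) by (apply ex_RInt_x3_density; lra).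
  replace PI with (PI - 0) at 2 by ring.
  apply abs_RInt_le_const.
  - pose proof PI_RGT_0; lra.
  - apply (ex_RInt_minus (V := R_NormedModule)); apply ex_RInt_x3_density; lra.
  - intros y _. now apply x3_density_lipschitz.
Qed.

Lemma continuity_pt_half_period K : K < 1 -> continuity_pt half_period K.
Proof.
  intros HK. set (a := (1 + Rmax 0 K) / 2).
  pose proof (Rmax_l 0 K). pose proof (Rmax_r 0 K).
  assert (Rmax 0 K < 1) by (apply Rmax_lub_lt; lra).
  apply (continuity_pt_lipschitz_near _ _ (a - K) (PI * (l1 ^ 2 * l2 / (2 * ((1 - a) * l1) ^ 3)))).
  - unfold a; lra.
  - intros K' HK'. rewrite Rmult_assoc.
    apply half_period_lipschitz; unfold a in *; pose proof (Rle_abs (K' - K)); lra.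
Qed.

Lemma x3_density_ge K y : 0 <= K < 1 -> 0 <= y <= PI ->
  l2 * K / (2 * (l1 * y + l1 * sqrt (1 - K))) <= x3_density K y.
Proof.
  intros HK Hy. set (s := l1 * sqrt (1 - K)).
  assert (Hs : 0 < s) by (apply Rmult_lt_0_compat; [lra | apply sqrt_lt_R0; lra]).
  assert (Hs2 : s ^ 2 = l1 ^ 2 * (1 - K)) by (unfold s; rewrite Rpow_mult_distr, pow2_sqrt; lra).
  pose proof (bK_rhs_pos K y ltac:(lra)). pose proof (bK_rhs_le K y ltac:(lra)).
  pose proof (bK_rhs_sq K y ltac:(lra)).
  assert (Hsin : 0 <= sin y <= y).
  { split; [apply sin_ge_0; lra|].
    destruct (Req_dec y 0) as [->|]; [rewrite sin_0; lra | left; apply sin_lt_x; lra]. }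
  assert (Hsc : sin y ^ 2 + cos y ^ 2 = 1) by (rewrite <- (sin2_cos2 y); unfold Rsqr; ring).
  unfold x3_density. set (f := bK_rhs l1 l2 K y) in *.
  assert (Hf : f <= l1 * y + s).
  { apply Rsqr_incr_0_var; [|nra]. unfold Rsqr. unfold bK_weight in *.
    assert (K * (l1 ^ 2 * cos y ^ 2) <= K * (l1 ^ 2 * cos y ^ 2 + l2 ^ 2 * sin y ^ 2)).
    { apply Rmult_le_compat_l; [lra|]. pose proof (pow2_ge_0 (l2 * sin y)). nra. }
    assert (K * (l1 ^ 2 * sin y ^ 2) <= l1 ^ 2 * y ^ 2).
    { assert (sin y ^ 2 <= y ^ 2) by nra.
      pose proof (pow2_ge_0 (sin y)). pose proof (pow2_ge_0 l1). nra. }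
    assert (K * (l1 ^ 2 * cos y ^ 2) = K * l1 ^ 2 - K * (l1 ^ 2 * sin y ^ 2)).
    { replace (cos y ^ 2) with (1 - sin y ^ 2) by lra. ring. }
    assert (0 <= l1 * y * s) by (apply Rmult_le_pos; [apply Rmult_le_pos|]; lra).
    replace (f * f) with (f ^ 2) by ring.
    replace ((l1 * y + s) * (l1 * y + s)) with (l1 ^ 2 * y ^ 2 + 2 * (l1 * y * s) + s ^ 2) by ring.
    lra. }
  assert (Hden : (l1 + f) * f <= 2 * l1 * (l1 * y + s)) by nra.
  apply Rle_trans with (l1 * l2 * K / (2 * l1 * (l1 * y + s))).
  - right. field. nra.
  - unfold Rdiv. apply Rmult_le_compat_l.
    + apply Rmult_le_pos; [apply Rmult_le_pos|]; lra.
    + apply Rinv_le_contravar; [apply Rmult_lt_0_compat|]; lra.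
Qed.

Lemma half_period_ge K : 0 <= K < 1 ->
  l2 * K / (2 * l1) * ln (PI / sqrt (1 - K)) <= half_period K.
Proof.
  intros HK. set (s := l1 * sqrt (1 - K)). pose proof PI_RGT_0.
  assert (Hsq : 0 < sqrt (1 - K)) by (apply sqrt_lt_R0; lra).
  assert (Hs : 0 < s) by (apply Rmult_lt_0_compat; lra).
  set (A y := l2 * K / (2 * l1) * ln (l1 * y + s)).
  assert (HA : is_RInt (fun y => l2 * K / (2 * (l1 * y + s))) 0 PI (A PI - A 0)).
  { apply (is_RInt_derive (V := R_CompleteNormedModule) A).
    - intros y Hy. rewrite Rmin_left, Rmax_right in Hy by lra.
      unfold A. auto_derive; [nra|]. field. nra.
    - intros y Hy. rewrite Rmin_left, Rmax_right in Hy by lra.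
      apply (ex_derive_continuous (V := R_NormedModule)). auto_derive. nra. }
  apply Rle_trans with (A PI - A 0).
  - unfold A. rewrite Rmult_0_r, Rplus_0_l, <- Rmult_minus_distr_l.
    apply Rmult_le_compat_l.
    { apply Rmult_le_pos; [apply Rmult_le_pos | apply Rlt_le, Rinv_0_lt_compat]; lra. }
    replace (PI / sqrt (1 - K)) with (l1 * PI / s) by (unfold s; field; lra).
    rewrite ln_div by nra. apply Rplus_le_compat_r, ln_le; nra.
  - rewrite <- (is_RInt_unique _ _ _ _ HA). apply RInt_le.
    + lra.
    + eexists; exact HA.
    + apply ex_RInt_x3_density; lra.
    + intros y Hy. apply x3_density_ge; lra.
Qed.

Lemma half_period_unbounded t : exists K, 0 < K < 1 /\ t < half_period K.
Proof.
  (* With sqrt (1 - K) = exp (- c), half_period_ge gives at least l2 c / (4 l1). *)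
  set (c := 4 * l1 * Rabs t / l2 + 1).
  assert (Hc : 1 <= c).
  { unfold c. pose proof (Rabs_pos t).
    assert (0 <= 4 * l1 * Rabs t / l2)
      by (apply Rmult_le_pos; [nra | apply Rlt_le, Rinv_0_lt_compat; lra]).
    lra. }
  assert (He : exp (- (2 * c)) <= 1 / 2).
  { rewrite exp_Ropp. pose proof (exp_ineq1 (2 * c) ltac:(lra)).
    apply Rle_trans with (/ 2); [apply Rinv_le_contravar|]; lra. }
  pose proof (exp_pos (- (2 * c))).
  exists (1 - exp (- (2 * c))). split; [lra|].
  eapply Rlt_le_trans; [|apply half_period_ge; lra].
  assert (Ec : exp (- (2 * c)) = exp (- c) ^ 2)
    by (simpl; rewrite Rmult_1_r, <- exp_plus; f_equal; ring).
  replace (1 - (1 - exp (- (2 * c)))) with (exp (- c) ^ 2) by (rewrite Ec; ring).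
  rewrite sqrt_pow2 by (apply Rlt_le, exp_pos).
  rewrite ln_div, ln_exp by (try apply exp_pos; apply PI_RGT_0).
  assert (Hpi : 0 <= ln PI) by (rewrite <- ln_1; apply ln_le; pose proof PI2_1; lra).
  set (k := 1 - exp (- (2 * c))). assert (Hk : 1 / 2 <= k) by (unfold k; lra).
  apply Rlt_le_trans with (l2 / (4 * l1) * c).
  - replace (l2 / (4 * l1) * c) with (Rabs t + l2 / (4 * l1)) by (unfold c; field; lra).
    pose proof (Rle_abs t). assert (0 < l2 / (4 * l1)) by (apply Rdiv_lt_0_compat; lra). lra.
  - replace (l2 / (4 * l1) * c) with (l2 / (2 * l1) * (1 / 2 * c)) by (field; lra).
    replace (l2 * k / (2 * l1) * (ln PI - - c)) with (l2 / (2 * l1) * (k * (ln PI + c)))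
      by (field; lra).
    apply Rmult_le_compat_l; [apply Rlt_le, Rdiv_lt_0_compat; lra | nra].
Qed.

Lemma is_derive_x3_density_integral_comp K b v : K < 1 ->
  derivable_pt_lim b v (bK_rhs l1 l2 K (b v)) ->
  is_derive (fun v => RInt (x3_density K) 0 (b v)) v
    (l1 * l2 * K / (l1 + bK_rhs l1 l2 K (b v))).
Proof.
  intros HK Hb. pose proof (bK_rhs_pos K (b v) HK).
  replace (l1 * l2 * K / (l1 + bK_rhs l1 l2 K (b v)))
    with (scal (bK_rhs l1 l2 K (b v)) (x3_density K (b v)))
    by (unfold scal; simpl; unfold mult; simpl; unfold x3_density; field; lra).
  apply (is_derive_comp (fun y => RInt (x3_density K) 0 y) b).
  - apply (is_derive_RInt (V := R_CompleteNormedModule) _ _ 0).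
    + apply filter_forall. intros y. now apply RInt_correct, ex_RInt_x3_density.
    + now apply continuous_x3_density.
  - now apply is_derive_Reals.
Qed.

Lemma helicoid_data_exists K : 0 <= K < 1 -> exists b x3 W, helicoid_data l1 l2 K b x3 W.
Proof.
  intros HK.
  destruct (autonomous_ode_solution (bK_rhs l1 l2 K) l1 (continuous_bK_rhs K))
    as [b [Hb0 [Hb HbW]]].
  { intros y. split; [apply bK_rhs_pos | apply bK_rhs_le]; lra. }
  destruct (HbW PI PI_RGT_0) as [W HW].
  exists b, (fun v => RInt (x3_density K) 0 (b v)), W.
  split; [|split]; [easy| |easy]. split.
  - now rewrite Hb0, RInt_point.
  - intros v. apply is_derive_Reals, is_derive_x3_density_integral_comp; [lra | apply Hb].
Qed.

Lemma helicoid_data_x3_W K b x3 W : K < 1 -> helicoid_data l1 l2 K b x3 W ->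
  x3 W = half_period K.
Proof.
  intros HK [[Hb0 Hb] [[Hx0 Hx] [HW HbW]]].
  set (G v := x3 v - RInt (x3_density K) 0 (b v)).
  assert (HG : forall v, is_derive G v 0).
  { intros v. rewrite <- (Rminus_diag (l1 * l2 * K / (l1 + bK_rhs l1 l2 K (b v)))).
    apply (is_derive_minus (K := R_AbsRing) (V := R_NormedModule)).
    - now apply is_derive_Reals.
    - now apply is_derive_x3_density_integral_comp. }
  assert (G0W : G 0 = G W) by (apply eq_is_derive; [intros; apply HG | lra]).
  unfold G in G0W. rewrite Hx0, Hb0, HbW, RInt_point in G0W.
  change zero with 0 in G0W. unfold half_period. lra.
Qed.

End Helicoid.

Theorem proposition4p4 (l1 l2 : R) (Hl : admissible_lambdas l1 l2)
  (T : R) (HT : T <> 0) :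
  exists K : R, -1 < K < 1 /\ K <> 0 /\
    (exists (b x3 : R -> R) (W : R), helicoid_data l1 l2 K b x3 W) /\
    (forall (b x3 : R -> R) (W : R), helicoid_data l1 l2 K b x3 W ->
       2 * Rabs (x3 W) = Rabs T).
Proof.
  assert (Hl2 : 0 < l2 /\ l2 <= l1) by (destruct Hl as [[? ?]|[? ?]]; lra).
  destruct Hl2 as [Hl2 Hl21].
  set (t := Rabs T / 2).
  assert (Ht : 0 < t) by (unfold t; pose proof (Rabs_pos_lt T HT); lra).
  destruct (half_period_unbounded l1 l2 Hl2 Hl21 t) as [K1 [HK1 HtK1]].
  destruct (IVT_interv (fun K => half_period l1 l2 K - t) 0 K1) as [K [HK HKt]].
  - intros K HK. apply continuity_pt_minus; [|apply continuity_pt_const; intros ? ?; easy].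
    apply continuity_pt_half_period; lra.
  - lra.
  - rewrite half_period_0; lra.
  - lra.
  - assert (HK0 : K <> 0) by (intros ->; rewrite half_period_0 in HKt; lra).
    exists K. split; [lra|]. split; [exact HK0|]. split.
    + apply helicoid_data_exists; lra.
    + intros b x3 W HD. rewrite (helicoid_data_x3_W l1 l2 Hl2 Hl21 K b x3 W ltac:(lra) HD).
      unfold t in HKt. pose proof (Rabs_pos T). rewrite Rabs_right; lra.
Qed.
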